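(* Let $n \geq 2$ and let $X_1, \dots, X_n$ be mutually independent nonnegative random variables with survival functions $\overline{F}_i(x) = \mathbb{P}(X_i > x)$, $i = 1, \dots, n$. Let $\boldsymbol{\theta} = (\theta_1, \dots, \theta_n) \in (0,1)^n$ with $\sum_{i=1}^n \theta_i = 1$, and let $\mathbf{I} = (I_1, \dots, I_n) \sim \mathrm{Categorical}(\boldsymbol{\theta})$ be independent of $X_1, \dots, X_n$. Suppose that for each $i \in \{1,\dots,n\}$ and every subset $\mu$ with $\{i\} \subseteq \mu \subsetneq \{1, \dots, n\}$, the condition $$\theta_{\mu} \, \overline{F}_i(x) \leq \overline{F}_i(x/\theta_{\mu}) \quad \text{for all } x \geq 0$$ is satisfied, where $\theta_\mu = \sum_{j \in \mu} \theta_j$. Then $$I_1 X_1 + \dots + I_n X_n \leq_{\mathrm{st}} \theta_1 X_1 + \dots + \theta_n X_n.$$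
   Context: $\mathbf{I} \sim \mathrm{Categorical}(\boldsymbol{\theta})$ means that almost surely exactly one component of $\mathbf{I}$ equals $1$ and all others equal $0$, with $\mathbb{P}(I_i = 1) = \theta_i$. For random variables $X, Y$, $X \leq_{\mathrm{st}} Y$ (first-order stochastic dominance) means $\mathbb{P}(X > x) \leq \mathbb{P}(Y > x)$ for all $x \in \mathbb{R}$. For a nonempty $\mu \subseteq \{1,\dots,n\}$, $\theta_\mu := \sum_{j\in\mu}\theta_j$. *)

From HB Require Import structures.
From mathcomp Require Import all_boot all_order all_algebra.
From mathcomp Require Import all_classical all_reals all_analysis.
Set Implicit Arguments. Unset Strict Implicit. Unset Printing Implicit Defensive.
Import Order.TTheory GRing.Theory Num.Theory.
Local Open Scope classical_set_scope.
Local Open Scope ring_scope.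

(* Mutual independence of a finite family of real random variables:
   the product rule P(X_0 \in B_0, ..., X_{n-1} \in B_{n-1}) = prod_i P(X_i \in B_i)
   for all Borel sets B_i (subfamilies are obtained by taking B_i = setT). *)
Definition mutually_independent {d} {T : measurableType d} {R : realType}
  (P : probability T R) (n : nat) (X : 'I_n -> T -> R) : Prop :=
  forall B : 'I_n -> set R, (forall i, measurable (B i)) ->
  P (\bigcap_(i in [set: 'I_n]) (X i @^-1` B i)) =
  (\prod_(i < n) P (X i @^-1` B i))%E.

Definition independent_vectors {d} {T : measurableType d} {R : realType}
  (P : probability T R) (m n : nat) (Y : 'I_m -> T -> R) (X : 'I_n -> T -> R) : Prop :=
  forall (C : 'I_m -> set R) (B : 'I_n -> set R),
  (forall j, measurable (C j)) -> (forall i, measurable (B i)) ->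
  P ((\bigcap_(j in [set: 'I_m]) (Y j @^-1` C j)) `&`
     (\bigcap_(i in [set: 'I_n]) (X i @^-1` B i))) =
  (P (\bigcap_(j in [set: 'I_m]) (Y j @^-1` C j)) *
   P (\bigcap_(i in [set: 'I_n]) (X i @^-1` B i)))%E.

Definition categorical {d} {T : measurableType d} {R : realType}
  (P : probability T R) (n : nat) (I : 'I_n -> T -> R) (theta : 'I_n -> R) : Prop :=
  [/\ (forall i, measurable_fun setT (I i)),
      {ae P, forall t, exists i, I i t = 1 /\ forall j, j != i -> I j t = 0}
    & forall i, P (I i @^-1` [set 1]) = (theta i)%:E].

Definition survival {d} {T : measurableType d} {R : realType}
  (P : probability T R) (X : T -> R) (x : R) : \bar R :=
  P [set t | x < X t].

Definition st_le {d} {T : measurableType d} {R : realType}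
  (P : probability T R) (X Y : T -> R) : Prop :=
  forall x : R, (P [set t | (x < X t)%R] <= P [set t | (x < Y t)%R])%E.

Definition theta_sum {R : realType} (n : nat) (theta : 'I_n -> R) (mu : {set 'I_n}) : R :=
  \sum_(j in mu) theta j.

From HB Require Import structures.
From mathcomp Require Import all_boot all_order all_algebra.
From mathcomp Require Import all_classical all_reals all_analysis.
From mathcomp Require Import ring.
Import Order.TTheory GRing.Theory Num.Theory.
Local Open Scope classical_set_scope.
Local Open Scope ring_scope.

(* Conditioning on the independent indicator vector I gives
   P(sum_i I_i X_i > x) <= sum_i theta_i P(X_i > x), so for x >= 0 it remains
   to bound the right-hand side by P(sum_i theta_i X_i > x).  The latter event
   contains E_A for A = {1..n}, where E_A is the event that, for some nonempty
   mu included in A, X_j > x / theta_mu for every j in mu.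
   By strong induction on |A| we show, for every product set Y_1 x ... x Y_n
   whose factors Y_k, k in A, contain ]x/theta_A, +oo[,
     sum_(j in A) theta_j P(X_j > x) prod_(k <> j) P(X_k in Y_k)
       <= P(E_A and X in Y).
   Cutting the Y_k, k in A, one at a time at x/theta_A, both sides split
   additively; a coordinate j cut below the threshold drops out of the sum,
   because its own factor is P(X_j > x) whatever Y_j is.  When all coordinates
   of A lie above the threshold, X in Y implies E_A and the hypothesis
   theta_A P(X_j > x) <= P(X_j > x/theta_A) bounds the sum by P(X in Y); when
   only those of a proper subset D do, the induction hypothesis for D applies,
   since x/theta_D >= x/theta_A and E_D is included in E_A.
   For x < 0 the right-hand event is almost sure. *)

Lemma sum_prod_split (R : comPzRingType) (I : finType) (c f g h : I -> R)
    (D : {set I}) (l : I) :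
  l \in D -> f l = g l + h l ->
  (forall k, k != l -> f k = g k) -> (forall k, k != l -> h k = g k) ->
  \sum_(j in D) c j * \prod_(k | k != j) f k =
  \sum_(j in D) c j * \prod_(k | k != j) g k +
  \sum_(j in D :\ l) c j * \prod_(k | k != j) h k.
Proof.
move=> lD fl fg hg.
have prod_off_l F : (forall k, k != l -> F k = g k) -> forall j, j != l ->
    \prod_(k | k != j) F k = F l * \prod_(k | (k != j) && (k != l)) g k.
  move=> Fg j jl; rewrite (bigD1 l) 1?eq_sym //=; congr (_ * _).
  by apply: eq_bigr => k /andP[_]; exact: Fg.
rewrite [LHS](bigD1 l lD) [in X in _ = X + _](bigD1 l lD) /=.
rewrite (eq_bigr _ (fun k => fg k)) -addrA; congr (_ + _).
have -> : \sum_(j in D :\ l) c j * \prod_(k | k != j) h k =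
    \sum_(j in D | j != l) c j * \prod_(k | k != j) h k.
  by apply: eq_bigl => j; rewrite in_setD1 andbC.
rewrite -big_split /=; apply: eq_bigr => j /andP[_ jl].
by rewrite !prod_off_l // fl; ring.
Qed.

Lemma sum_weighted_prod_le_prod (R : realFieldType) (I : finType)
    (w c f : I -> R) (A : {set I}) :
  (forall j, 0 <= w j) -> (forall k, 0 <= f k) -> 0 < \sum_(j in A) w j ->
  (forall j, j \in A -> (\sum_(i in A) w i) * c j <= f j) ->
  \sum_(j in A) w j * c j * \prod_(k | k != j) f k <= \prod_k f k.
Proof.
set s := \sum_(i in A) w i => w_ge0 f_ge0 s_gt0 cf.
apply: (@le_trans _ _ (\sum_(j in A) w j / s * \prod_k f k)).
  apply: ler_sum => j jA; rewrite [X in _ <= _ * X](bigD1 j) //= mulrA.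
  apply: ler_wpM2r; first exact: prodr_ge0.
  rewrite -mulrA (mulrC s^-1); apply: ler_wpM2l => //.
  by rewrite ler_pdivlMr // mulrC; exact: cf.
by rewrite -!mulr_suml divff ?mul1r // gt_eqF.
Qed.

Section probability.
Context {R : realType} {d : measure_display} {T : measurableType d}.

Lemma measurable_preimage (f : T -> R) (B : set R) :
  measurable_fun setT f -> measurable B -> measurable (f @^-1` B).
Proof. by move=> mf mB; rewrite -[_ @^-1` _]setTI; exact: mf. Qed.

Lemma measurable_sum_mul_gt (n : nat) (c f : 'I_n -> T -> R) (y : R) :
  (forall i, measurable_fun setT (c i)) ->
  (forall i, measurable_fun setT (f i)) ->
  measurable [set t | y < \sum_(i < n) c i t * f i t].
Proof.
move=> mc mf; rewrite -preimage_itvoy; apply: measurable_preimage; last first.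
  exact: measurable_itv.
by apply: measurable_sum => i; exact: measurable_realfun.measurable_funM.
Qed.

Variable P : probability T R.

Lemma le_measure_ae (E F : set T) :
  measurable E -> measurable F -> {ae P, forall t, E t -> F t} ->
  (P E <= P F)%E.
Proof.
move=> mE mF [N [mN PN0 EFN]].
apply: (@le_trans _ _ (P (F `|` N))).
  apply: le_measure; rewrite ?inE //; first exact: measurableU.
  move=> t Et; have [Ft|nFt] := pselect (F t); first by left.
  by right; apply: EFN => /(_ Et).
have PN_le0 : (P N <= 0)%E by move/eqP: PN0; rewrite eq_le => /andP[].
by apply: le_trans (measureU2 P mF mN) _; rewrite -[leRHS]adde0 leeD.
Qed.

Lemma le_measure_sum_cover (I : finType) (A : set T) (G : I -> set T) :
  measurable A -> (forall i, measurable (G i)) -> A `<=` \bigcup_i G i ->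
  (P A <= \sum_(i : I) P (G i))%E.
Proof.
move=> mA mG AG; rewrite fsbig_seq ?index_enum_uniq //.
apply: content_sub_fsum => // t /AG [i _ Git].
by exists i => //=; exact: mem_index_enum.
Qed.

Lemma le_survival_ae_gt (f g : T -> R) (y : R) :
  measurable [set t | y < f t] -> measurable [set t | y < g t] ->
  {ae P, forall t, y < g t} -> (survival P f y <= survival P g y)%E.
Proof.
move=> mf mg g_gt; apply: le_trans (probability_le1 P mf) _.
rewrite -(probability_setT P); apply: le_measure_ae => //.
by apply: filterS g_gt.
Qed.

Definition prob (A : set T) : R := fine (P A).

Lemma probE A : measurable A -> P A = (prob A)%:E.
Proof. by move=> mA; rewrite /prob fineK // fin_num_measure. Qed.

Lemma prob_ge0 A : 0 <= prob A.
Proof. by rewrite /prob fine_ge0 // measure_ge0. Qed.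

Lemma le_prob A B : measurable A -> measurable B -> A `<=` B -> prob A <= prob B.
Proof.
by move=> mA mB AB; rewrite -lee_fin -!probE // le_measure ?inE.
Qed.

Lemma probDI A B :
  measurable A -> measurable B -> prob A = prob (A `\` B) + prob (A `&` B).
Proof.
move=> mA mB; apply/EFin_inj.
rewrite EFinD -!probE //; first exact: measureDI.
  exact: measurableI.
exact: measurableD.
Qed.

Lemma survival_probE (f : T -> R) x : measurable_fun setT f ->
  survival P f x = (prob (f @^-1` `]x, +oo[))%:E.
Proof.
move=> mf; rewrite -probE; first by rewrite preimage_itvoy.
by apply: measurable_preimage => //; exact: measurable_itv.
Qed.

Lemma bigcap_preimage_with (m : nat) (Z : 'I_m -> T -> R) (j : 'I_m) (C : set R) :
  \bigcap_(k in [set: 'I_m]) (Z k @^-1` [eta fun=> setT with j |-> C] k) =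
  Z j @^-1` C.
Proof.
apply/seteqP; split=> [t /(_ j I)|t Ct k _] /=; first by rewrite eqxx.
by case: eqP => [->|].
Qed.

Lemma independent_vectors_coord (m n : nat) (Z : 'I_m -> T -> R)
    (X : 'I_n -> T -> R) (j : 'I_m) (i : 'I_n) (C B : set R) :
  independent_vectors P Z X -> measurable C -> measurable B ->
  P (Z j @^-1` C `&` X i @^-1` B) = (P (Z j @^-1` C) * P (X i @^-1` B))%E.
Proof.
move=> indep mC mB.
rewrite -(bigcap_preimage_with _ Z j C) -(bigcap_preimage_with _ X i B).
by apply: indep => k /=; case: eqP.
Qed.

Lemma survival_mixture_le (n : nat) (X I : 'I_n -> T -> R) (theta : 'I_n -> R)
    (y : R) :
  (forall i, measurable_fun setT (X i)) -> categorical P I theta ->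
  independent_vectors P I X ->
  (survival P (fun t => (\sum_(i < n) I i t * X i t)%R) y <=
   \sum_(i < n) (theta i)%:E * survival P (X i) y)%E.
Proof.
move=> mX [mI aeI PI] indepIX.
pose G i := I i @^-1` [set 1] `&` X i @^-1` `]y, +oo[.
have mG i : measurable (G i).
  by apply: measurableI; apply: measurable_preimage => //; exact: measurable_set1.
apply: (@le_trans _ _ (P (\bigcup_i G i))).
  apply: le_measure_ae.
  - exact: measurable_sum_mul_gt.
  - by apply: fin_bigcup_measurable => //; exact: finite_finset.
  apply: filterS aeI => t [i [Ii1 Ij0]] /=; rewrite (bigD1 i) //= big1.
    rewrite Ii1 mul1r addr0 => yX.
    by exists i => //; rewrite /G /= in_itv /= andbT.
  by move=> j /Ij0 ->; rewrite mul0r.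
apply: le_trans (le_measure_sum_cover _ _ _ _ mG _) _ => //.
  by apply: fin_bigcup_measurable => //; exact: finite_finset.
apply: lee_sum => i _.
by rewrite /G independent_vectors_coord // -PI /survival preimage_itvoy.
Qed.

Context {n : nat} (X : 'I_n -> T -> R).
Hypothesis mX : forall i, measurable_fun setT (X i).

Definition rect (Y : 'I_n -> set R) : set T :=
  \bigcap_(i in [set: 'I_n]) (X i @^-1` Y i).

Lemma measurable_rect Y : (forall i, measurable (Y i)) -> measurable (rect Y).
Proof.
move=> mY; apply: fin_bigcap_measurable; first exact: finite_finset.
by move=> i _; exact: measurable_preimage.
Qed.

Lemma prob_rect Y : mutually_independent P X -> (forall i, measurable (Y i)) ->
  prob (rect Y) = \prod_i prob (X i @^-1` Y i).
Proof.
move=> indepX mY; apply/EFin_inj; rewrite -probE; last exact: measurable_rect.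
rewrite /rect indepX // -prodEFin; apply: eq_bigr => i _.
by rewrite probE //; exact: measurable_preimage.
Qed.

Lemma probDI_rect (E : set T) (Y : 'I_n -> set R) (l : 'I_n) (B : set R) :
  measurable E -> (forall i, measurable (Y i)) -> measurable B ->
  prob (E `&` rect Y) =
  prob (E `&` rect [eta Y with l |-> Y l `&` B]) +
  prob (E `&` rect [eta Y with l |-> Y l `\` B]).
Proof.
move=> mE mY mB.
have rect_with Z :
    E `&` rect [eta Y with l |-> Y l `&` Z] = E `&` rect Y `&` X l @^-1` Z.
  apply/seteqP; split=> t /=.
  - move=> [Et YZt]; split; last by have := YZt l I; rewrite /= eqxx => -[].
    by split=> // i _; have := YZt i I; rewrite /=; case: eqP => [->[]|].
  - move=> [[Et Yt] Zt]; split=> // i _ /=.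
    by case: eqP => [->|_]; [split=> //; exact: Yt | exact: Yt].
rewrite addrC (probDI (E `&` rect Y) (X l @^-1` B)); first last.
- exact: measurable_preimage.
- by apply: measurableI => //; exact: measurable_rect.
by rewrite !setDE preimage_setC -!rect_with.
Qed.

End probability.

Section exceedance.
Context {R : realType} {d : measure_display} {T : measurableType d}.
Variables (P : probability T R) (n : nat) (X : 'I_n -> T -> R).
Variables (theta : 'I_n -> R) (x : R).
Hypothesis mX : forall i, measurable_fun setT (X i).
Hypothesis indepX : mutually_independent P X.
Hypothesis theta_gt0 : forall i, 0 < theta i.
Hypothesis x_ge0 : 0 <= x.

Local Notation prob := (prob P).
Local Notation rect := (rect X).

Definition level (mu : {set 'I_n}) : R := x / theta_sum theta mu.

Hypothesis survival_scaling : forall j (mu : {set 'I_n}), j \in mu ->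
  ((theta_sum theta mu)%:E * survival P (X j) x <= survival P (X j) (level mu))%E.

Lemma theta_sum_gt0 (mu : {set 'I_n}) :
  mu != finset.set0 -> 0 < theta_sum theta mu.
Proof.
case/set0Pn => j jmu; apply: lt_le_trans (theta_gt0 j) _.
rewrite /theta_sum (bigD1 j) //= lerDl sumr_ge0 // => i _; exact: ltW.
Qed.

Lemma le_theta_sum (mu A : {set 'I_n}) :
  mu \subset A -> theta_sum theta mu <= theta_sum theta A.
Proof.
move=> muA; rewrite /theta_sum [leRHS](big_setID mu) /= (finset.setIidPr muA).
by rewrite lerDl sumr_ge0 // => i _; exact: ltW.
Qed.

Lemma le_level (mu A : {set 'I_n}) :
  mu != finset.set0 -> mu \subset A -> level A <= level mu.
Proof.
move=> mu0 muA; have A0 : A != finset.set0.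
  by apply: contraNneq mu0 => A0; rewrite -finset.subset0 -A0.
rewrite /level ler_wpM2l // lef_pV2 ?posrE ?theta_sum_gt0 //.
exact: le_theta_sum.
Qed.

Definition exceed (mu : {set 'I_n}) : set T :=
  rect (fun j => if j \in mu then `]level mu, +oo[%classic else setT).

Definition exceedU (A : {set 'I_n}) : set T :=
  \bigcup_(mu in [set mu : {set 'I_n} | (mu \subset A) && (mu != finset.set0)])
    exceed mu.

Lemma measurable_exceedU A : measurable (exceedU A).
Proof.
apply: fin_bigcup_measurable => [|mu _]; first exact: finite_finset.
by apply: measurable_rect => // j; case: ifP.
Qed.

Lemma exceedU_subset (B A : {set 'I_n}) : B \subset A -> exceedU B `<=` exceedU A.
Proof.
move=> BA t [mu /= /andP[muB mu0] exc_mu]; exists mu => //=.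
by rewrite mu0 andbT (fintype.subset_trans muB BA).
Qed.

Definition survival_form (D : {set 'I_n}) (Y : 'I_n -> set R) : R :=
  \sum_(j in D) theta j * prob (X j @^-1` `]x, +oo[) *
    \prod_(k | k != j) prob (X k @^-1` Y k).

Definition exceedU_dominates (A : {set 'I_n}) : Prop :=
  forall Y : 'I_n -> set R, (forall k, measurable (Y k)) ->
  (forall k, k \in A -> `]level A, +oo[ `<=` Y k) ->
  survival_form A Y <= prob (exceedU A `&` rect Y).

Lemma survival_form_split (D : {set 'I_n}) (Y : 'I_n -> set R) (l : 'I_n)
    (B : set R) :
  l \in D -> (forall k, measurable (Y k)) -> measurable B ->
  survival_form D Y = survival_form D [eta Y with l |-> Y l `&` B] +
                      survival_form (D :\ l) [eta Y with l |-> Y l `\` B].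
Proof.
move=> lD mY mB; rewrite /survival_form.
pose c j := theta j * prob (X j @^-1` `]x, +oo[).
pose f k := prob (X k @^-1` Y k).
pose g k := prob (X k @^-1` [eta Y with l |-> Y l `&` B] k).
pose h k := prob (X k @^-1` [eta Y with l |-> Y l `\` B] k).
apply: (sum_prod_split _ _ c f g h) => // [|k /negbTE kl|k /negbTE kl].
- rewrite /f /g /h /= eqxx addrC.
  by apply: probDI; exact: measurable_preimage.
- by rewrite /f /g /= kl.
- by rewrite /h /g /= kl.
Qed.

Section exceedU_induction.
Variable A : {set 'I_n}.
Hypothesis IH : forall {B : {set 'I_n}}, B \proper A -> exceedU_dominates B.

Lemma survival_form_pinned (D : {set 'I_n}) (Y : 'I_n -> set R) :
  D \subset A -> (forall k, measurable (Y k)) ->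
  (forall k, k \in D -> Y k = `]level A, +oo[%classic) ->
  survival_form D Y <= prob (exceedU A `&` rect Y).
Proof.
move=> DA mY YD.
have [->|D0] := eqVneq D finset.set0.
  by rewrite /survival_form big_set0 prob_ge0.
have [DAe|DnA] := eqVneq D A.
  subst D; have -> : exceedU A `&` rect Y = rect Y.
    apply/setIidr => t Yt; exists A; first by rewrite /= fintype.subxx D0.
    by move=> j _ /=; case: ifP => jA //; rewrite -(YD j jA); exact: Yt.
  rewrite prob_rect //; apply: sum_weighted_prod_le_prod => [j|k||j jA].
  - exact: ltW.
  - exact: prob_ge0.
  - exact: theta_sum_gt0.
  - rewrite YD // -lee_fin EFinM -!survival_probE //; exact: survival_scaling.
have DpA : D \proper A by rewrite finset.properEneq DnA DA.
apply: le_trans (IH DpA Y mY _) _.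
  move=> k kD; rewrite YD // => z /=; rewrite !in_itv /= !andbT => Dz.
  exact: le_lt_trans (le_level _ _ D0 DA) Dz.
apply: le_prob.
- by apply: measurableI; [exact: measurable_exceedU | exact: measurable_rect].
- by apply: measurableI; [exact: measurable_exceedU | exact: measurable_rect].
- by apply: setSI; exact: exceedU_subset.
Qed.

Lemma survival_form_unpin (D U : {set 'I_n}) (Y : 'I_n -> set R) :
  U \subset D -> D \subset A -> (forall k, measurable (Y k)) ->
  (forall k, k \in U -> `]level A, +oo[ `<=` Y k) ->
  (forall k, k \in D -> k \notin U -> Y k = `]level A, +oo[%classic) ->
  survival_form D Y <= prob (exceedU A `&` rect Y).
Proof.
have [m] := ubnP #|U|; elim: m => // m IHm in D U Y *; rewrite ltnS => cU.
move=> UD DA mY YU YD.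
have [U0|[l lU]] := set_0Vmem U.
  by apply: survival_form_pinned => // k kD; apply: YD => //; rewrite U0 inE.
set B := `]level A, +oo[%classic.
have mB : measurable B by exact: measurable_itv.
have lD : l \in D := fintype.subsetP UD l lU.
have cUl : (#|U :\ l| < m)%N by rewrite (cardsD1 l U) lU add1n in cU.
have YlB : Y l `&` B = B by apply/setIidr; exact: YU.
have mY_with Z : measurable Z -> forall k, measurable ([eta Y with l |-> Z] k).
  by move=> mZ k /=; case: eqP.
have YU_with Z k : k \in U :\ l -> B `<=` [eta Y with l |-> Z] k.
  by rewrite in_setD1 => /andP[/negbTE kl kU] /=; rewrite kl; exact: YU.
rewrite (survival_form_split D Y l B) //.
rewrite (probDI_rect P X mX (exceedU A) Y l B) //; last exact: measurable_exceedU.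
apply: lerD; apply: (IHm _ (U :\ l)) => //.
- exact: fintype.subset_trans (subsetDl _ _) UD.
- by apply: mY_with; exact: measurableI.
- exact: YU_with.
- move=> k kD; rewrite in_setD1 negb_and negbK /=.
  by case: eqP => [_ _|_ /= kU]; [exact: YlB | exact: YD].
- exact: finset.setSD.
- exact: fintype.subset_trans (subsetDl _ _) DA.
- by apply: mY_with; exact: measurableD.
- exact: YU_with.
- move=> k; rewrite !in_setD1 => /andP[/negbTE kl kD] /=; rewrite kl => kU.
  exact: YD.
Qed.

End exceedU_induction.

Lemma exceedU_dominates_all (A : {set 'I_n}) : exceedU_dominates A.
Proof.
have [m] := ubnP #|A|; elim: m => // m IHm in A *; rewrite ltnS => cA Y mY YA.
apply: (@survival_form_unpin A _ A A) => // [B BA|k kA]; last by rewrite kA.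
by apply: IHm; exact: leq_trans (proper_card BA) cA.
Qed.

Lemma sum_survival_le_exceedU :
  \sum_(i < n) theta i * prob (X i @^-1` `]x, +oo[) <= prob (exceedU [set: 'I_n]).
Proof.
have formT : survival_form [set: 'I_n] (fun=> setT) =
    \sum_(i < n) theta i * prob (X i @^-1` `]x, +oo[).
  apply: eq_big => [i|i _]; first by rewrite inE.
  by rewrite big1 ?mulr1 // => k _; rewrite preimage_setT /prob probability_setT.
have rectT : rect (fun=> setT) = setT by apply/seteqP; split.
rewrite -formT -[exceedU _]setIT -rectT.
by apply: exceedU_dominates_all => // k _; exact: subsetT.
Qed.

Lemma exceedU_sub_weighted_sum t : (forall i, 0 <= X i t) ->
  exceedU [set: 'I_n] t -> x < \sum_(i < n) theta i * X i t.
Proof.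
move=> X_ge0 [mu /= /andP[_ mu0] exc_mu].
have -> : x = \sum_(i < n | i \in mu) theta i * level mu.
  by rewrite -mulr_suml mulrC divfK // gt_eqF // theta_sum_gt0.
apply: (@lt_le_trans _ _ (\sum_(i < n | i \in mu) theta i * X i t)).
  apply: ltr_sum => [|i imu].
    case/set0Pn: mu0 => j jmu; apply/hasP.
    by exists j => //; exact: mem_index_enum.
  by rewrite ltr_pM2l //; have := exc_mu i I; rewrite /= imu /= in_itv /= andbT.
rewrite [leRHS](bigID (fun i => i \in mu)) /= lerDl.
by apply: sumr_ge0 => i _; apply: mulr_ge0; [exact: ltW | exact: X_ge0].
Qed.

Lemma sum_survival_le_survival_weighted_sum :
  {ae P, forall t, forall i, 0 <= X i t} ->
  (\sum_(i < n) (theta i)%:E * survival P (X i) x <=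
   survival P (fun t => (\sum_(i < n) theta i * X i t)%R) x)%E.
Proof.
move=> X_ge0.
under eq_bigr => i _ do rewrite (survival_probE _ _ _ (mX i)) -EFinM.
rewrite sumEFin; apply: (@le_trans _ _ (prob (exceedU [set: 'I_n]))%:E).
  by rewrite lee_fin; exact: sum_survival_le_exceedU.
rewrite -probE; last exact: measurable_exceedU.
rewrite /survival /=; apply: le_measure_ae.
- exact: measurable_exceedU.
- by apply: (measurable_sum_mul_gt _ (fun i _ => theta i)).
- by apply: filterS X_ge0 => t X0; exact: exceedU_sub_weighted_sum.
Qed.

End exceedance.

Theorem theorem2 (R : realType) (d : measure_display) (T : measurableType d)
  (P : probability T R) (n : nat) (X : 'I_n -> T -> R) (I : 'I_n -> T -> R)
  (theta : 'I_n -> R) :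
  (2 <= n)%N ->
  (forall i, measurable_fun setT (X i)) ->
  (forall i, {ae P, forall t, 0 <= X i t}) ->
  mutually_independent P X ->
  (forall i, 0 < theta i < 1) ->
  \sum_(i < n) theta i = 1 ->
  categorical P I theta ->
  independent_vectors P I X ->
  (forall (i : 'I_n) (mu : {set 'I_n}), i \in mu -> (mu \proper [set: 'I_n])%SET ->
     forall x : R, 0 <= x ->
     ((theta_sum theta mu)%:E * survival P (X i) x
        <= survival P (X i) (x / theta_sum theta mu))%E) ->
  st_le P (fun t => \sum_(i < n) I i t * X i t) (fun t => \sum_(i < n) theta i * X i t).
Proof.
move=> _ mX X_ge0 indepX theta_01 theta_sum1 catI indepIX scaling y.
have theta_gt0 i : 0 < theta i by case/andP: (theta_01 i).
have X_ge0_all : {ae P, forall t, forall i, 0 <= X i t}.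
  by apply: filter_forall => i; exact: X_ge0.
have [y_lt0|y_ge0] := ltP y 0.
  apply: le_survival_ae_gt.
  - by case: catI => mI _ _; exact: measurable_sum_mul_gt.
  - by apply: (measurable_sum_mul_gt _ (fun i _ => theta i)).
  apply: filterS X_ge0_all => t X0; apply: lt_le_trans y_lt0 _.
  by apply: sumr_ge0 => i _; apply: mulr_ge0; [exact: ltW | exact: X0].
apply: le_trans (survival_mixture_le P n X I theta y mX catI indepIX) _.
apply: sum_survival_le_survival_weighted_sum => // j mu jmu; rewrite /level.
have [->|muT] := eqVneq mu [set: 'I_n]%SET; last first.
  by apply: scaling; rewrite // properT.
have -> : theta_sum theta [set: 'I_n] = 1.
  by rewrite -theta_sum1; apply: eq_bigl => i; rewrite inE.
by rewrite mul1e divr1.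
Qed.
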